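(* Let $V,W$ be subsets of normed spaces over $\mathbb{R}$ or $\mathbb{C}$, $T:V\to W$, let $\emptyset\neq C\subseteq T(V)$ be a Chebyshev set in $W$, and $P_C:W\to W$ the projection onto $C$. For $w\in W$ let $B_w=\arg\min\{\|v\|:v\in V,\ P_C(T(v))=P_C(w)\}$ and let $W'$ be the set of $w\in W$ for which this minimum is attained. (1) If $w\in W'\setminus C$ then $P_C(w)\in W'\cap C$; and any operator $S:W'\to V$ with $S(w)\in B_w$ for $w\in W'\cap C$ and $S(w)=S(P_C(w))$ for $w\in W'\setminus C$ is a pseudo-inverse of $P_C\circ T$ on $W'$. (2) If in addition $T$ is continuous, $W$ is a Hilbert space, and every closed ball in $V$ is compact, then $W'=W$.
   Context: A nonempty subset $C$ of a metric space $W$ is a Chebyshev set if every $w\in W$ has exactly one nearest point in $C$; $P_C(w)$ is that point. For subsets $V,W$ of normed spaces, $T':V\to W$ and $E\subseteq W$, an operator $S:E\to V$ is a pseudo-inverse of $T'$ on $E$ if: (BAS) for every $w\in E$, the minimum $m_w=\min_{v\in V}\|T'(v)-w\|$ is attained, the norm attains its minimum on $\{v\in V:\|T'(v)-w\|=m_w\}$, and $S(w)\in\arg\min\{\|v\|:v\in V,\ \|T'(v)-w\|=m_w\}$; and (MP2) $S(T'(S(w)))=S(w)$ for all $w\in E$. *)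

From HB Require Import structures.
From mathcomp Require Import all_boot all_order all_algebra.
From mathcomp Require Import all_classical all_reals all_analysis.
Set Implicit Arguments. Unset Strict Implicit. Unset Printing Implicit Defensive.
Import Order.TTheory GRing.Theory Num.Theory.
Import numFieldNormedType.Exports.
Local Open Scope classical_set_scope.
Local Open Scope ring_scope.

Section Defs.
Variable K : numFieldType.

Definition nearest_point (F : normedModType K) (C : set F) (w c : F) : Prop :=
  C c /\ forall c', C c' -> `|w - c| <= `|w - c'|.

Definition chebyshev_set (F : normedModType K) (W C : set F) : Prop :=
  C !=set0 /\ C `<=` W /\ forall w, W w -> exists! c, nearest_point C w c.

Definition argmin_norm (E : normedModType K) (A : set E) : set E :=
  [set v | A v /\ forall v', A v' -> `|v| <= `|v'|].

Definition is_pseudo_inverse (E F : normedModType K) (V : set E) (T' : E -> F)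
    (Ed : set F) (S : F -> E) : Prop :=
  forall w, Ed w ->
    (exists m : K,
       (exists2 v, V v & `|T' v - w| = m) /\
       (forall v, V v -> m <= `|T' v - w|) /\
       argmin_norm [set v | V v /\ `|T' v - w| = m] (S w)) /\
    (* MP2 (with the implicit requirement that T'(S w) lies in Ed) *)
    Ed (T' (S w)) /\ S (T' (S w)) = S w.

(* W (a subset of the normed space F) is a Hilbert space: a linear subspace,
   complete, whose norm is induced by an inner product which is linear in the
   first argument and Hermitian w.r.t. an involutive field automorphism cj of K
   (cj = id over R, complex conjugation over C). *)
Definition hilbert_subspace (F : normedModType K) (W : set F) : Prop :=
  [/\ W 0, (forall x y, W x -> W y -> W (x + y)),
      (forall (a : K) x, W x -> W (a *: x)),
      (forall u : nat -> F, (forall n, W (u n)) -> cauchy (u @ \oo) ->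
          exists2 l, W l & u @ \oo --> l) &
      exists (cj : {rmorphism K -> K}) (ip : F -> F -> K),
        [/\ involutive cj,
            (forall a x y z, W x -> W y -> W z ->
               ip (a *: x + y) z = a * ip x z + ip y z),
            (forall x y, W x -> W y -> ip y x = cj (ip x y)) &
            (forall x, W x -> ip x x = `|x| ^+ 2)]].

End Defs.

From HB Require Import structures.
From mathcomp Require Import all_boot all_order all_algebra.
From mathcomp Require Import all_classical all_reals all_analysis.
Import Order.TTheory GRing.Theory Num.Theory.
Import numFieldNormedType.Exports.
Local Open Scope classical_set_scope.
Local Open Scope ring_scope.

(* Since C lies in T(V), the distance |PC w - w| from w to C is attained by
   PC o T, and a value PC (T v) attains it exactly when it equals PC w; so the
   best approximations of w by PC o T are the v with PC (T v) = PC w, and their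
   norm minimisers B w only depend on PC w. This gives both the reduction of
   W' to C and the conditions BAS and MP2. For the second part, continuity of T
   makes {v in V | PC (T v) = PC w} relatively closed in V, and compactness of
   the balls of V then yields a vector of minimal norm in it. *)

Section MinNorm.
Context {K : numFieldType} {E : normedModType K} {V : set E}.

Lemma closure_norm_le (A : set E) (b v : E) :
  (forall a, A a -> `|a| <= `|b|) -> closure A v -> `|v| <= `|b|.
Proof.
move=> le_b clAv; rewrite real_leNgt ?normr_real //; apply/negP => lt_bv.
have e_gt0 : 0 < `|v| - `|b| by rewrite subr_gt0.
have [a [Aa]] := clAv _ (nbhsx_ballx v _ e_gt0).
rewrite -ball_normE /ball_ /= => lt_va.
have := le_lt_trans (ler_normD (v - a) a) (ltr_leD lt_va (le_b _ Aa)).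
by rewrite !subrK ltxx.
Qed.

Hypothesis V_ball_compact :
  forall v0 (r : K), V v0 -> compact [set v | V v /\ `|v - v0| <= r].

(* Over a numFieldType there is no infimum to take: the minimiser is a cluster
   point of the norm sublevel sets, cut down to a compact ball around a. *)
Lemma argmin_norm_nonempty (A : set E) :
  A `<=` V -> A !=set0 -> (forall v, V v -> closure A v -> A v) ->
  argmin_norm A !=set0.
Proof.
move=> AV [a Aa] A_closed.
pose r := `|a| + `|a|.
pose A' := [set v | A v /\ `|v - a| <= r].
pose below (b : E) := [set v | A' v /\ `|v| <= `|b|].
have A'a : A' a by split; rewrite // subrr normr0 addr_ge0.
have below_proper : ProperFilter (filter_from A' below).
  apply: filter_from_proper; last by move=> b A'b; exists b.
  apply: filter_from_filter; first by exists a.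
  move=> b c A'b A'c.
  have /orP[bc|cb] := real_leVge (normr_real b) (normr_real c).
  - by exists b => // v [A'v vb]; split; split=> //; apply: le_trans bc.
  - by exists c => // v [A'v vc]; split; split=> //; apply: le_trans cb.
have below_ball : filter_from A' below [set v | V v /\ `|v - a| <= r].
  by exists a => // v [[Av ?] _]; split=> //; apply: AV.
have [s [[Vs _] s_cluster]] :=
  V_ball_compact a r (AV _ Aa) _ below_proper below_ball.
have s_closure b : A' b -> closure (below b) s.
  by move=> A'b B; apply: s_cluster; exists b.
have s_le b : A' b -> `|s| <= `|b|.
  by move=> A'b; apply: closure_norm_le (s_closure _ A'b) => v [].
exists s; split=> [|b Ab].
  apply: A_closed => // B /(s_closure _ A'a) [v [[[Av _] _] Bv]].
  by exists v.
have [b_near|b_far] := boolP (`|b - a| <= r); first exact: s_le.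
apply: le_trans (s_le _ A'a) _.
move: b_far; rewrite -real_ltNge ?realD ?normr_real // => /lt_le_trans.
by move=> /(_ _ (ler_normB b a)); rewrite ltrD2r => /ltW.
Qed.

End MinNorm.

Lemma nearest_point_preimage_closed {K : numFieldType} {E F : normedModType K}
    {V : set E} {T : E -> F} {C : set F} {c : F} {v : E} :
  {within V, continuous T} -> V v ->
  closure [set u | V u /\ nearest_point C (T u) c] v ->
  nearest_point C (T v) c.
Proof.
move=> T_cont Vv clv.
have [u [[_ [Cc _]] _]] := clv _ filterT.
split=> // c' Cc'; rewrite real_leNgt ?normr_real //; apply/negP => lt_c'.
set d := `|T v - c| - `|T v - c'|.
have d2_gt0 : 0 < d / 2 by rewrite divr_gt0 // subr_gt0.
have near_v : within V (nbhs v) (T @^-1` ball (T v) (d / 2)).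
  by rewrite nbhs_subspace_in //; exact: T_cont v _ (nbhsx_ballx (T v) _ d2_gt0).
have [w [[Vw [_ le_w]] /(_ Vw)]] := clv _ near_v.
rewrite -ball_normE /ball_ /= => lt_vw.
suff : `|T v - c| < `|T v - c| by rewrite ltxx.
apply: le_lt_trans (ler_distD (T w) _ _) _.
apply: (@le_lt_trans _ _ (`|T v - T w| + (`|T w - T v| + `|T v - c'|))).
  by apply: lerD => //; apply: le_trans (le_w _ Cc') _; apply: ler_distD.
rewrite addrA [X in _ < X](_ : _ = d + `|T v - c'|); last by rewrite subrK.
by apply: ltr_leD => //; rewrite [d]splitr ltrD // distrC.
Qed.

Section ProjectionComposite.
Context {K : numFieldType} {E F : normedModType K}.
Context {V : set E} {W : set F} {T : E -> F} {C : set F} {PC : F -> F}.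
Hypotheses (chebC : chebyshev_set W C)
  (PC_nearest : forall w, W w -> nearest_point C w (PC w)).

Lemma nearest_point_unique {w x y} :
  W w -> nearest_point C w x -> nearest_point C w y -> x = y.
Proof.
case: chebC => _ [_ uniqC] /uniqC [c [_ eq_c]] wx wy.
by rewrite -(eq_c _ wx) (eq_c _ wy).
Qed.

Lemma proj_mem {w} : W w -> C (PC w).
Proof. by case/PC_nearest. Qed.

Lemma proj_eqP {w c} : W w -> PC w = c <-> nearest_point C w c.
Proof.
move=> Ww; split=> [<-|]; first exact: PC_nearest.
exact/nearest_point_unique/PC_nearest.
Qed.

Lemma proj_id {c} : C c -> PC c = c.
Proof.
case: chebC => _ [CW _] Cc; apply/proj_eqP; first exact: CW.
by split=> // c' _; rewrite subrr normr0.
Qed.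

Lemma proj_idem {w} : W w -> PC (PC w) = PC w.
Proof. by move=> /proj_mem /proj_id. Qed.

Lemma dist_proj_le {w c} : W w -> C c -> `|PC w - w| <= `|c - w|.
Proof. by move=> /PC_nearest [_ le_c] /le_c; rewrite !(distrC w). Qed.

Lemma dist_proj_eq {w u} :
  W w -> W u -> (`|PC u - w| = `|PC w - w|) <-> PC u = PC w.
Proof.
move=> Ww Wu; split=> [eq_d|->] //; apply/esym/proj_eqP => //.
split=> [|c' Cc']; first exact: proj_mem.
by rewrite distrC eq_d distrC; case: (PC_nearest _ Ww) => _; apply.
Qed.

Hypotheses (T_maps : forall v, V v -> W (T v)) (C_range : C `<=` T @` V).

Local Notation B w := (argmin_norm [set v | V v /\ PC (T v) = PC w]).
Local Notation W' := [set w | W w /\ B w !=set0].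

Lemma argmin_proj {w} : W w -> B (PC w) = B w.
Proof. by move=> Ww; rewrite proj_idem. Qed.

Lemma argmin_dom_proj {w} : W' w -> W' (PC w).
Proof.
case: chebC => _ [CW _] [Ww Bw]; split; last by rewrite argmin_proj.
exact/CW/proj_mem.
Qed.

Lemma proj_comp_best_approx w s : W w -> B w s ->
  exists m : K,
    (exists2 v, V v & `|(PC \o T) v - w| = m) /\
    (forall v, V v -> m <= `|(PC \o T) v - w|) /\
    argmin_norm [set v | V v /\ `|(PC \o T) v - w| = m] s.
Proof.
move=> Ww Bs; exists `|PC w - w|; split; [|split].
- have [v0 Vv0 Tv0] := C_range _ (proj_mem Ww).
  by exists v0 => //=; rewrite Tv0 proj_idem.
- by move=> v /T_maps /proj_mem; apply: dist_proj_le.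
- suff -> : [set v | V v /\ `|(PC \o T) v - w| = `|PC w - w|] =
            [set v | V v /\ PC (T v) = PC w] by [].
  by apply/seteqP; split=> v [Vv /(dist_proj_eq Ww (T_maps _ Vv))].
Qed.

Lemma proj_comp_pseudo_inverse (S : F -> E) :
  (forall w, W' w -> C w -> B w (S w)) ->
  (forall w, W' w -> ~ C w -> S w = S (PC w)) ->
  is_pseudo_inverse V (PC \o T) W' S.
Proof.
move=> S_C S_notC w W'w; have [Ww _] := W'w.
have S_B : B w (S w).
  have [Cw|nCw] := pselect (C w); first exact: S_C.
  rewrite S_notC // -(argmin_proj Ww); apply: S_C (argmin_dom_proj W'w) _.
  exact: proj_mem.
have [[_ PTS] _] := S_B.
split; first exact: proj_comp_best_approx.
rewrite /= PTS; split; first exact: argmin_dom_proj.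
have [Cw|nCw] := pselect (C w); first by rewrite proj_id.
by rewrite -S_notC.
Qed.

Lemma proj_argmin_nonempty w :
  {within V, continuous T} ->
  (forall v0 (r : K), V v0 -> compact [set v | V v /\ `|v - v0| <= r]) ->
  W w -> B w !=set0.
Proof.
move=> T_cont V_compact Ww.
have -> : [set v | V v /\ PC (T v) = PC w] =
          [set v | V v /\ nearest_point C (T v) (PC w)].
  by apply/seteqP; split=> v [Vv /(proj_eqP (T_maps _ Vv))].
apply: (argmin_norm_nonempty V_compact); first by move=> v [].
  have [v0 Vv0 Tv0] := C_range _ (proj_mem Ww).
  exists v0; split; rewrite // Tv0 -proj_eqP ?proj_idem //.
  by case: chebC => _ [CW _]; apply/CW/proj_mem.
by move=> v Vv /(nearest_point_preimage_closed T_cont Vv).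
Qed.

End ProjectionComposite.

Theorem mainTheorem11 (K : numFieldType) (E F : normedModType K)
    (Vs : set E) (Ws : set F) (Top : E -> F) (C : set F) (PC : F -> F) :
  (forall v, Vs v -> Ws (Top v)) ->
  chebyshev_set Ws C ->
  C `<=` Top @` Vs ->
  (forall w, Ws w -> nearest_point C w (PC w)) ->
  let B := fun w => argmin_norm [set v | Vs v /\ PC (Top v) = PC w] in
  let Ws' := [set w | Ws w /\ B w !=set0] in
  ((forall w, Ws' w -> ~ C w -> Ws' (PC w) /\ C (PC w)) /\
   (forall S : F -> E,
      (forall w, Ws' w -> C w -> B w (S w)) ->
      (forall w, Ws' w -> ~ C w -> S w = S (PC w)) ->
      is_pseudo_inverse Vs (PC \o Top) Ws' S)) /\
  ({within Vs, continuous Top} ->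
   hilbert_subspace Ws ->
   (forall v0 (r : K), Vs v0 -> compact [set v | Vs v /\ `|v - v0| <= r]) ->
   Ws' = Ws).
Proof.
move=> T_maps chebC C_range PC_nearest B Ws'.
split; first split.
- move=> w W'w _; split; first exact: (argmin_dom_proj chebC PC_nearest W'w).
  by apply: (proj_mem PC_nearest); case: W'w.
- exact: proj_comp_pseudo_inverse.
move=> T_cont _ V_compact; apply/seteqP; split=> [w [] //|w Ww].
by split=> //; apply: (proj_argmin_nonempty chebC PC_nearest T_maps C_range).
Qed.
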